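(* Let $(\mathcal S,\mathcal A,P,r)$ be any finite MDP (general/multichain) and let $(g^\star,h^\star)$ be a solution of the modified Bellman equations. Let $V^0\in\mathbb R^n$ and let $V^k=\lambda_kV^0+(1-\lambda_k)TV^{k-1}$ for $k\ge1$ with $\lambda_k=\frac{2}{k+2}$ (Anchored Value Iteration), and for each $k$ let $\pi_k$ be a greedy policy, i.e. $T^{\pi_k}V^k=TV^k$. Let $\mathcal D$ be the set of all deterministic policies, \[\epsilon=\inf_{\pi\in\mathcal D\setminus\{\pi\,:\,\mathcal P^{\pi}g^\star=g^\star\}}\|\mathcal P^{\pi}g^\star-g^\star\|_\infty\in(0,\infty]\] (with $\epsilon=+\infty$ if the index set is empty), and $K=\big(3\|r\|_\infty+12\|V^0-h^\star\|_\infty+3\|g^\star\|_\infty\big)/\epsilon$. Then for every $k>K$, \[\|g^\star-g^{\pi_k}\|_\infty\le\|TV^k-V^k-g^\star\|_\infty\le\frac{8}{k+1}\|V^0-h^\star\|_\infty+\frac{K}{k+1}\|g^\star\|_\infty.\]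
   Context: An MDP $(\mathcal S,\mathcal A,P,r)$ has finite state space $\mathcal S$ with $|\mathcal S|=n$ (functions on $\mathcal S$ are identified with vectors in $\mathbb R^n$), finite action space $\mathcal A$, transition probabilities $P(s'\mid s,a)$ and bounded reward $r$, $\|r\|_\infty=\max_{s,a}|r(s,a)|$. A policy $\pi$ assigns to each state a distribution $\pi(\cdot\mid s)$ on $\mathcal A$; $r^\pi(s)=\sum_a\pi(a\mid s)r(s,a)$, $\mathcal P^\pi(s,s')=\sum_a\pi(a\mid s)P(s'\mid s,a)$. Average reward: $g^\pi(s)=\liminf_{T\to\infty}\frac1T\mathbb E_\pi[\sum_{t=0}^{T-1}r(s_t,a_t)\mid s_0=s]$, $g^\star(s)=\max_\pi g^\pi(s)$. $T^\pi V=r^\pi+\mathcal P^\pi V$; $(TV)(s)=\max_a\{r(s,a)+\sum_{s'}P(s'\mid s,a)V(s')\}$. A pair $(g,h)$ solves the modified Bellman equations if $\max_a\sum_{s'}P(s'\mid s,a)g(s')=g(s)$ and $\max_a\{r(s,a)+\sum_{s'}P(s'\mid s,a)h(s')\}=h(s)+g(s)$ for all $s$, with some policy attaining both maxima simultaneously; solutions exist and the first component of any solution equals $g^\star$. A policy is deterministic if each $\pi(\cdot\mid s)$ is a point mass. *)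

From HB Require Import structures.
From mathcomp Require Import all_boot all_order all_algebra.
From mathcomp Require Import boolp classical_sets reals ereal topology normedtype sequences.
Set Implicit Arguments. Unset Strict Implicit. Unset Printing Implicit Defensive.
Import Order.TTheory GRing.Theory Num.Theory.
Local Open Scope ring_scope.

Section MDP.
Variables (R : realType) (n : nat) (A : finType).
(* transition kernel P s a s' = P(s' | s, a) and reward r s a *)
Variables (P : 'I_n -> A -> 'I_n -> R) (r : 'I_n -> A -> R).

Definition is_MDP : Prop :=
  (forall s a s', 0 <= P s a s') /\ (forall s a, \sum_(s' < n) P s a s' = 1).

Definition is_policy (pi : 'I_n -> A -> R) : Prop :=
  (forall s a, 0 <= pi s a) /\ (forall s, \sum_(a : A) pi s a = 1).

Definition is_det_policy (pi : 'I_n -> A -> R) : Prop :=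
  forall s, exists a0 : A, forall a, pi s a = (a == a0)%:R.

Definition rpi (pi : 'I_n -> A -> R) : 'cV[R]_n :=
  \col_s \sum_(a : A) pi s a * r s a.

Definition Ppi (pi : 'I_n -> A -> R) : 'M[R]_n :=
  \matrix_(s, s') \sum_(a : A) pi s a * P s a s'.

Definition Tpi (pi : 'I_n -> A -> R) (V : 'cV[R]_n) : 'cV[R]_n :=
  rpi pi + Ppi pi *m V.

(* maximum over the (nonempty) finite action set; the default value f a0 is
   itself one of the maximised values, so the result is max_a f a. *)
Definition amax (a0 : A) (f : A -> R) : R := \big[Num.max/f a0]_(a : A) f a.

Definition Topt (a0 : A) (V : 'cV[R]_n) : 'cV[R]_n :=
  \col_s amax a0 (fun a => r s a + \sum_(s' < n) P s a s' * V s' 0).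

Definition normInf (V : 'cV[R]_n) : R := \big[Num.max/0]_(s < n) `|V s 0|.
Definition rnorm : R := \big[Num.max/0]_(s < n) \big[Num.max/0]_(a : A) `|r s a|.

Definition modified_bellman (a0 : A) (g h : 'cV[R]_n) : Prop :=
  (forall s, amax a0 (fun a => \sum_(s' < n) P s a s' * g s' 0) = g s 0) /\
  (forall s, amax a0 (fun a => r s a + \sum_(s' < n) P s a s' * h s' 0)
             = h s 0 + g s 0) /\
  exists pi, is_policy pi /\ Ppi pi *m g = g /\ Tpi pi h = h + g.

(* average reward: g^pi(s) = liminf_T (1/T) E_pi[sum_{t<T} r(s_t,a_t) | s_0 = s]
   = liminf_T (1/T) sum_{t<T} ((P^pi)^t r^pi)(s) *)
Definition gpi (pi : 'I_n -> A -> R) : 'cV[R]_n :=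
  \col_s limn_inf (fun T : nat =>
     (T%:R)^-1 * \sum_(t < T) ((Ppi pi ^+ t) *m rpi pi) s 0).

Definition eps_gap (g : 'cV[R]_n) : \bar R :=
  ereal_inf [set (normInf (Ppi pi *m g - g))%:E | pi in
     [set pi | is_det_policy pi /\ Ppi pi *m g != g]].

(* K = (3||r|| + 12||V0 - h|| + 3||g||)/epsilon, with K = 0 if epsilon = +oo *)
Definition Kconst (g h V0 : 'cV[R]_n) : R :=
  let num := 3 * rnorm + 12 * normInf (V0 - h) + 3 * normInf g in
  match eps_gap g with
  | EFin e => num / e
  | _ => 0
  end.

Definition lam (k : nat) : R := 2 / (k%:R + 2).

End MDP.

(* Let e = ||V^0 - h||.  Started from h, anchored value iteration follows the reference
   trajectory W^k = h + (k/3) g exactly (T (h + c g) = h + (c+1) g for c >= 0), and since T is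
   nonexpansive the error E^k of V^k against it satisfies
   (k+3) E^(k+1) = 2 E^0 + (k+1) (T V^k - T W^k), whence ||E^k|| <= e.
   The drift k/3 along g penalises every action that loses gain by at least (k/3) eps,
   while greedy actions are within 2e of optimal; so beyond k = 6e/eps every greedy
   action keeps g.  From then on T moves by exactly g/3 between consecutive iterates,
   the weighted increments (k+2)(k+3) ||E^(k+1) - E^k|| grow by at most 4e per step, and
   the Bellman residual T V^k - V^k - g decays like e/k.  The burn-in phase is paid for
   by a crude bound on ||V^(k+1) - V^k|| valid for all k; this is the K ||g|| / (k+1)
   term.  Finally, a greedy policy keeping g has T^pi V^k = V^k + g + residual, so its
   Cesaro averages of rewards telescope to within the residual of g. *)

From HB Require Import structures.
From mathcomp Require Import all_boot all_order all_algebra.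
From mathcomp Require Import boolp classical_sets reals ereal topology normedtype sequences.
From mathcomp Require Import lra ring.
Set Implicit Arguments. Unset Strict Implicit. Unset Printing Implicit Defensive.
Import Order.TTheory GRing.Theory Num.Theory.
Local Open Scope ring_scope.

Section FiniteMax.
Variables (R : realType) (A : finType) (a0 : A) (f : A -> R).

Lemma le_amax a : f a <= amax a0 f.
Proof. exact: le_bigmax. Qed.

Lemma amax_le c : (forall a, f a <= c) -> amax a0 f <= c.
Proof. by move=> fc; apply: bigmax_le => // a _; apply: fc. Qed.

Lemma amax_attained : exists a, amax a0 f = f a.
Proof.
rewrite /amax; elim/big_ind: _; first by exists a0.
- by move=> x y [a ->] [b ->]; rewrite /Num.max; case: ifP; [exists b | exists a].
- by move=> a _; exists a.
Qed.

End FiniteMax.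

Section SupNorm.
Variables (R : realType) (n : nat).
Implicit Types (U V : 'cV[R]_n).

Lemma normInf_ge0 V : 0 <= normInf V.
Proof. by rewrite /normInf; elim/big_ind: _ => // x y; rewrite le_max => ->. Qed.

Lemma le_normInf V s : `|V s 0| <= normInf V.
Proof. exact: le_bigmax. Qed.

Lemma normInf_le V c : 0 <= c -> (forall s, `|V s 0| <= c) -> normInf V <= c.
Proof. by move=> c0 Vc; apply: bigmax_le => // s _; apply: Vc. Qed.

Lemma normInf_le_scaled V c b : 0 < c -> 0 <= b ->
  (forall s, c * `|V s 0| <= b) -> c * normInf V <= b.
Proof.
move=> c_gt0 b_ge0 Vb; rewrite mulrC -ler_pdivlMr //.
apply: normInf_le => [|s]; first exact: divr_ge0 (ltW c_gt0).
by rewrite ler_pdivlMr // mulrC.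
Qed.

Lemma normInfN V : normInf (- V) = normInf V.
Proof. by apply: eq_bigr => s _; rewrite mxE normrN. Qed.

Lemma normInf_distrC U V : normInf (U - V) = normInf (V - U).
Proof. by rewrite -normInfN opprB. Qed.

Lemma entryD U V s : (U + V) s 0 = U s 0 + V s 0. Proof. by rewrite mxE. Qed.
Lemma entryB U V s : (U - V) s 0 = U s 0 - V s 0. Proof. by rewrite !mxE. Qed.
Lemma entryN V s : (- V) s 0 = - V s 0. Proof. by rewrite mxE. Qed.
Lemma entryZ c V s : (c *: V) s 0 = c * V s 0. Proof. by rewrite mxE. Qed.

Definition prob_vec (p : 'I_n -> R) := (forall i, 0 <= p i) /\ \sum_i p i = 1.

Lemma prob_vec_avg_le p V : prob_vec p -> \sum_i p i * V i 0 <= normInf V.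
Proof.
move=> [p_ge0 p_sum1]; rewrite -[X in _ <= X]mul1r -p_sum1 mulr_suml.
apply: ler_sum => i _; apply: ler_wpM2l => //.
exact: le_trans (ler_norm _) (le_normInf _ _).
Qed.

Lemma prob_vec_avg_norm p V : prob_vec p -> `|\sum_i p i * V i 0| <= normInf V.
Proof.
move=> pp; rewrite ler_norml prob_vec_avg_le // andbT lerNl -normInfN.
apply: le_trans (prob_vec_avg_le (- V) pp); rewrite -sumrN.
by apply: ler_sum => i _; rewrite mxE mulrN.
Qed.

End SupNorm.

Section Policies.
Variables (R : realType) (n : nat) (A : finType).
Implicit Types (pi : 'I_n -> A -> R) (f : A -> R).

Lemma policy_avg_eq pi s f c a : is_policy pi ->
  (forall b, f b <= c) -> \sum_b pi s b * f b = c -> pi s a != 0 -> f a = c.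
Proof.
move=> [pi_ge0 pi_sum1] fc avg_c pa.
have gaps_ge0 b : true -> 0 <= pi s b * (c - f b).
  by move=> _; rewrite mulr_ge0 // subr_ge0.
have gaps_sum0 : \sum_b pi s b * (c - f b) = 0.
  under eq_bigr do rewrite mulrBr.
  by rewrite sumrB -mulr_suml pi_sum1 mul1r avg_c subrr.
move/eqP: (psumr_eq0P gaps_ge0 gaps_sum0 (i := a) isT).
by rewrite mulf_eq0 (negPf pa) subr_eq0 => /eqP.
Qed.

Lemma policy_support pi s : is_policy pi -> exists a, pi s a != 0.
Proof.
move=> [_ pi_sum1]; apply/existsP; apply: contraT; rewrite negb_exists => /forallP pi0.
suff : \sum_a pi s a = 0 by rewrite pi_sum1 => /eqP; rewrite oner_eq0.
by apply: big1 => a _; apply/eqP; rewrite -[_ == _]negbK pi0.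
Qed.

Lemma sum_mul_indicator f c : \sum_a (a == c)%:R * f a = f c.
Proof. by rewrite (bigD1 c) //= eqxx mul1r big1 ?addr0 // => a /negPf ->; rewrite mul0r. Qed.

Lemma det_policy_is_policy pi : is_det_policy pi -> is_policy pi.
Proof.
move=> pi_det; split=> s; have [c pi_c] := pi_det s; first by move=> a; rewrite pi_c ler0n.
by rewrite (eq_bigr _ (fun a _ => pi_c a)) (bigD1 c) //= eqxx big1 ?addr0 // => a /negPf ->.
Qed.

End Policies.

Section BellmanOperators.
Variables (R : realType) (n : nat) (A : finType) (a0 : A).
Variables (P : 'I_n -> A -> 'I_n -> R) (r : 'I_n -> A -> R).
Hypothesis P_MDP : is_MDP P.
Implicit Types (U V : 'cV[R]_n) (pi : 'I_n -> A -> R).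
Local Notation T := (Topt P r a0).

Definition qval V s a := r s a + \sum_(s' < n) P s a s' * V s' 0.

Lemma Topt_entry V s : T V s 0 = amax a0 (qval V s).
Proof. by rewrite mxE. Qed.

Lemma kernel_prob_vec s a : prob_vec (P s a).
Proof. by case: P_MDP. Qed.

Lemma qvalB V U s a : qval V s a - qval U s a = \sum_s' P s a s' * (V - U) s' 0.
Proof.
rewrite /qval opprD addrACA subrr add0r -sumrB.
by apply: eq_bigr => s' _; rewrite entryB mulrBr.
Qed.

Lemma qval_le_Topt V s a : qval V s a <= T V s 0.
Proof. by rewrite Topt_entry; apply: le_amax. Qed.

Lemma Topt_sub_le_greedy V U s : exists a, T V s 0 = qval V s a /\
  T V s 0 - T U s 0 <= \sum_s' P s a s' * (V - U) s' 0.
Proof.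
have [a Va] := amax_attained a0 (qval V s).
exists a; rewrite Topt_entry Va; split => //.
by rewrite -qvalB lerD2l lerN2 qval_le_Topt.
Qed.

Lemma Topt_nonexpansive V U s : `|T V s 0 - T U s 0| <= normInf (V - U).
Proof.
rewrite ler_norml; apply/andP; split; last first.
  have [a [_ le_a]] := Topt_sub_le_greedy V U s.
  exact: le_trans le_a (prob_vec_avg_le _ (kernel_prob_vec s a)).
have [a [_ le_a]] := Topt_sub_le_greedy U V s.
rewrite lerNl opprB normInf_distrC.
exact: le_trans le_a (prob_vec_avg_le _ (kernel_prob_vec s a)).
Qed.

Lemma Ppi_mulmx_entry pi V s :
  (Ppi P pi *m V) s 0 = \sum_a pi s a * \sum_s' P s a s' * V s' 0.
Proof.
rewrite mxE (eq_bigr (fun s' => \sum_a pi s a * P s a s' * V s' 0)); last first.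
  by move=> s' _; rewrite mxE mulr_suml.
rewrite exchange_big; apply: eq_bigr => a _; rewrite mulr_sumr.
by apply: eq_bigr => s' _; rewrite mulrA.
Qed.

Lemma Tpi_entry pi V s : Tpi P r pi V s 0 = \sum_a pi s a * qval V s a.
Proof.
rewrite entryD Ppi_mulmx_entry mxE -big_split.
by apply: eq_bigr => a _; rewrite mulrDr.
Qed.

Lemma Ppi_prob_vec pi s : is_policy pi -> prob_vec (fun s' => Ppi P pi s s').
Proof.
case: P_MDP => P_ge0 P_sum1 [pi_ge0 pi_sum1]; split=> [s'|].
  by rewrite mxE; apply: sumr_ge0 => a _; rewrite mulr_ge0.
rewrite (eq_bigr (fun s' => \sum_a pi s a * P s a s')); last by move=> s' _; rewrite mxE.
rewrite exchange_big -(pi_sum1 s); apply: eq_bigr => a _.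
by rewrite -mulr_sumr P_sum1 mulr1.
Qed.

Lemma Ppi_mulmx_norm pi V s : is_policy pi -> `|(Ppi P pi *m V) s 0| <= normInf V.
Proof. by move=> pi_pol; rewrite mxE; apply: prob_vec_avg_norm (Ppi_prob_vec s pi_pol). Qed.

Lemma rnorm_ge0 : 0 <= rnorm r.
Proof.
rewrite /rnorm; elim/big_ind: _ => // [x y|s _]; first by rewrite le_max => ->.
by elim/big_ind: _ => // x y; rewrite le_max => ->.
Qed.

Lemma greedy_support pi V s a : is_policy pi -> Tpi P r pi V = T V ->
  pi s a != 0 -> qval V s a = T V s 0.
Proof.
move=> pi_pol pi_greedy; apply: policy_avg_eq pi_pol _ _ => [b|].
  exact: qval_le_Topt.
by rewrite -Tpi_entry pi_greedy.
Qed.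

End BellmanOperators.

Section ModifiedBellman.
Variables (R : realType) (n : nat) (A : finType) (a0 : A).
Variables (P : 'I_n -> A -> 'I_n -> R) (r : 'I_n -> A -> R).
Hypothesis P_MDP : is_MDP P.
Variables (g h : 'cV[R]_n).
Hypothesis gh_bellman : modified_bellman P r a0 g h.
Local Notation T := (Topt P r a0).
Local Notation qval := (qval P r).

Definition Pg s a := \sum_(s' < n) P s a s' * g s' 0.

Lemma Pg_le s a : Pg s a <= g s 0.
Proof. by case: gh_bellman => g_eq _; rewrite -(g_eq s); apply: (le_amax a0 (Pg s)). Qed.

Lemma qval_h_le s a : qval h s a <= h s 0 + g s 0.
Proof. by case: gh_bellman => _ [h_eq _]; rewrite -(h_eq s); apply: (le_amax a0 (qval h s)). Qed.

Lemma optimal_action s : exists b, Pg s b = g s 0 /\ qval h s b = h s 0 + g s 0.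
Proof.
case: gh_bellman => _ [_ [pi [pi_pol [pi_g pi_h]]]].
have [b pib] := policy_support s pi_pol.
exists b; split; apply: policy_avg_eq pi_pol _ _ pib.
- exact: Pg_le.
- by rewrite -Ppi_mulmx_entry pi_g.
- exact: qval_h_le.
- by rewrite -Tpi_entry pi_h entryD.
Qed.

Lemma qval_shift c s a : qval (h + c *: g) s a = qval h s a + c * Pg s a.
Proof.
rewrite /qval /Pg -addrA mulr_sumr -big_split; congr (_ + _).
by apply: eq_bigr => s' _; rewrite entryD entryZ mulrDr mulrCA.
Qed.

Lemma Topt_shift c s : 0 <= c -> T (h + c *: g) s 0 = h s 0 + (c + 1) * g s 0.
Proof.
move=> c_ge0; apply/eqP; rewrite eq_le; apply/andP; split.
  rewrite Topt_entry; apply: amax_le => a; rewrite qval_shift.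
  have := qval_h_le s a; have := ler_wpM2l c_ge0 (Pg_le s a); lra.
have [b [Pgb qhb]] := optimal_action s.
by apply: le_trans (qval_le_Topt a0 P r _ _ b); rewrite qval_shift Pgb qhb; lra.
Qed.

Lemma det_Ppi_mulmx pi s c : (forall a, pi s a = (a == c)%:R) ->
  (Ppi P pi *m g) s 0 = Pg s c.
Proof.
move=> pi_c; rewrite Ppi_mulmx_entry (eq_bigr _ (fun a _ => congr1 (fun x => x * _) (pi_c a))).
exact: sum_mul_indicator.
Qed.

Lemma eps_gap_ge0 : (0%:E <= eps_gap P g)%E.
Proof. by apply/ereal_infP => _ [pi _ <-]; rewrite lee_fin normInf_ge0. Qed.

(* Witness: play [a] at [s] and an optimal action elsewhere. *)
Lemma eps_gap_le_deficit s a : Pg s a != g s 0 -> (eps_gap P g <= (g s 0 - Pg s a)%:E)%E.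
Proof.
move=> a_deficit.
have [opt opt_spec] := fin_all_exists optimal_action.
pose pi s' a' : R := if s' == s then (a' == a)%:R else (a' == opt s')%:R.
have pi_det : is_det_policy pi.
  by move=> s'; rewrite /pi; case: (s' == s); [exists a | exists (opt s')].
have pi_g s' : (Ppi P pi *m g) s' 0 = if s' == s then Pg s a else g s' 0.
  case: (eqVneq s' s) => [->|s'_s]; first by apply: det_Ppi_mulmx => a'; rewrite /pi eqxx.
  rewrite (@det_Ppi_mulmx pi s' (opt s')); first by case: (opt_spec s').
  by move=> a'; rewrite /pi (negPf s'_s).
apply: ge_ereal_inf; exists (normInf (Ppi P pi *m g - g))%:E.
  exists pi => //; split => //; apply: contra a_deficit => /eqP pi_fix.
  by have := pi_g s; rewrite pi_fix eqxx => <-.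
rewrite lee_fin; apply: normInf_le => [|s']; first by rewrite subr_ge0 Pg_le.
rewrite entryB pi_g; case: (eqVneq s' s) => [->|_].
  by rewrite ler0_norm ?opprB // subr_le0 Pg_le.
by rewrite subrr normr0 subr_ge0 Pg_le.
Qed.

Lemma eps_gap_gt0 e : eps_gap P g = e%:E -> 0 < e.
Proof.
pose d := \big[Num.min/1]_s \big[Num.min/1]_(a | Pg s a != g s 0) (g s 0 - Pg s a).
have d_gt0 : 0 < d.
  apply: lt_bigmin => // s _; apply: lt_bigmin => // a a_deficit.
  by rewrite subr_gt0 lt_neqAle a_deficit Pg_le.
suff : (d%:E <= eps_gap P g)%E.
  by move=> + e_eq; rewrite e_eq lee_fin; apply: lt_le_trans.
apply/ereal_infP => _ [pi [pi_det pi_moves] <-]; rewrite lee_fin.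
have [s pi_moves_s] : exists s, (Ppi P pi *m g) s 0 != g s 0.
  apply/existsP; apply: contraNT pi_moves; rewrite negb_exists => /forallP pi_fix.
  by apply/eqP/matrixP => i j; rewrite (ord1 j); apply/eqP; rewrite -[_ == _]negbK pi_fix.
have [c pi_c] := pi_det s; rewrite (det_Ppi_mulmx pi_c) in pi_moves_s.
apply: le_trans (_ : g s 0 - Pg s c <= _).
  exact: le_trans (bigmin_le _ s _) (bigmin_le_cond _ (fun a => g s 0 - Pg s a) pi_moves_s).
by apply: le_trans (le_normInf _ s); rewrite entryB (det_Ppi_mulmx pi_c) distrC ler_norm.
Qed.

Lemma eps_gap_le e : eps_gap P g = e%:E -> e <= 2 * normInf g.
Proof.
move=> e_eq.
have [[pi [pi_det pi_moves]]|no_pi] :=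
  pselect (exists pi, is_det_policy pi /\ Ppi P pi *m g != g); last first.
  move: e_eq; rewrite /eps_gap.
  suff -> : [set pi | is_det_policy pi /\ Ppi P pi *m g != g]%classic = set0.
    by rewrite image_set0 ereal_inf0.
  by apply/seteqP; split => // pi pi_moves; apply: no_pi; exists pi.
have : (eps_gap P g <= (normInf (Ppi P pi *m g - g))%:E)%E.
  by apply: ge_ereal_inf; exists (normInf (Ppi P pi *m g - g))%:E => //; exists pi.
rewrite e_eq lee_fin => /le_trans; apply; apply: normInf_le => [|s].
  by rewrite mulr_ge0 // normInf_ge0.
rewrite entryB mulr2n mulrDl mul1r; apply: le_trans (ler_normB _ _) _.
by rewrite lerD ?le_normInf // Ppi_mulmx_norm //; apply: det_policy_is_policy.
Qed.

End ModifiedBellman.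

Section LiminfPerturbation.
Variable R : realType.
Local Open Scope classical_set_scope.
Implicit Types (u w z b : R^o ^nat).

Lemma cvg_invn_mul_bounded b C : (forall T, `|b T| <= C) ->
  (fun T : nat => T%:R^-1 * b T : R^o) @ \oo --> (0 : R^o).
Proof.
move=> bC; apply/cvgr0Pnorm_le => eps eps_gt0.
have C_ge0 : 0 <= C by apply: le_trans (bC 0%N).
have /andP[_ N_gt] := truncn_itv (divr_ge0 C_ge0 (ltW eps_gt0)).
exists (Num.Def.trunc (C / eps)).+1 => // T /= N_le_T.
have T_gt0 : (0 : R) < T%:R by rewrite ltr0n (leq_trans _ N_le_T).
rewrite normrM ger0_norm ?invr_ge0 ?ler0n // -ler_pdivlMl ?invr_gt0 // invrK.
apply: le_trans (bC T) _; rewrite -ler_pdivrMr // ltW //.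
by apply: lt_le_trans N_gt _; rewrite ler_nat.
Qed.

Lemma limn_inf_add_cvg0 w z : bounded_fun w -> z @ \oo --> (0 : R^o) ->
  limn_inf (w \+ z) = limn_inf w.
Proof.
move=> w_bd z_cvg.
have z_bd : bounded_fun z by apply: cvg_seq_bounded; apply/cvg_ex; exists 0.
pose Nz T := - z T : R^o.
have Nz_cvg : Nz @ \oo --> (0 : R^o) by rewrite -oppr0; apply: cvgN.
have Nz_bd : bounded_fun Nz by apply: cvg_seq_bounded; apply/cvg_ex; exists 0.
have wz_bd : bounded_fun (w \+ z) by apply: bounded_funD.
have wzNz : (w \+ z) \+ Nz = w by apply/funext => T /=; rewrite addrK.
apply/eqP; rewrite eq_le; apply/andP; split.
  by have := le_limn_infD wz_bd Nz_bd; rewrite wzNz (cvg_limn_inf_sup Nz_cvg).1 addr0.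
by have := le_limn_infD w_bd z_bd; rewrite (cvg_limn_inf_sup z_cvg).1 addr0.
Qed.

Lemma limn_inf_bounds w lo hi : bounded_fun w ->
  (forall T, (0 < T)%N -> lo <= w T <= hi) -> lo <= limn_inf w <= hi.
Proof.
move=> w_bd w_in; rewrite limn_infE //; apply/andP; split.
  apply: le_trans (_ : infs w 1 <= _).
    apply: lb_le_inf; first by exists (w 1%N); exists 1%N.
    by move=> _ [T /= T_gt0 <-]; case/andP: (w_in T T_gt0).
  by apply: ub_le_sup; [exact: bounded_fun_has_ubound_infs | exists 1%N].
apply: ge_sup; first by exists (infs w 0); exists 0%N.
move=> _ [m _ <-]; apply: le_trans (_ : w m.+1 <= _).
  apply: ge_inf; first exact/has_lbound_sdrop/bounded_fun_has_lbound.
  by exists m.+1 => /=.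
by case/andP: (w_in m.+1 isT).
Qed.

Lemma limn_inf_dist_le u b c rho C : (forall T, `|b T| <= C) ->
  (forall T, (0 < T)%N -> `|u T - c - T%:R^-1 * b T| <= rho) ->
  `|limn_inf u - c| <= rho.
Proof.
move=> bC u_near.
pose z T := T%:R^-1 * b T : R^o; pose w T := u T - z T : R^o.
have w_near T : (0 < T)%N -> c - rho <= w T <= c + rho.
  by move=> T_gt0; rewrite -ler_distl /w /z addrAC; apply: u_near.
have w_bd : bounded_fun w.
  exists (`|w 0%N| + `|c| + rho); split; rewrite ?num_real // => x x_gt T _.
  apply/ltW/(le_lt_trans _ x_gt); case: T => [|T].
    by rewrite -addrA lerDl addr_ge0 // (le_trans _ (u_near 1%N isT)).
  have /andP[lo hi] := w_near T.+1 isT.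
  rewrite -addrA ler_wpDl // ler_norml; apply/andP; split.
    by apply: le_trans lo; rewrite opprD lerD // lerNl ler_normr lexx orbT.
  by apply: le_trans hi _; rewrite lerD // ler_norm.
have -> : u = w \+ z by apply/funext => T; rewrite /= subrK.
rewrite limn_inf_add_cvg0 //; last exact: cvg_invn_mul_bounded bC.
by rewrite ler_distl; apply: limn_inf_bounds.
Qed.

End LiminfPerturbation.

Section AverageReward.
Variables (R : realType) (n : nat) (A : finType) (a0 : A).
Variables (P : 'I_n -> A -> 'I_n -> R) (r : 'I_n -> A -> R).
Hypothesis P_MDP : is_MDP P.
Variables (g W : 'cV[R]_n) (pi : 'I_n -> A -> R).
Hypotheses (pi_pol : is_policy pi) (pi_g : Ppi P pi *m g = g).
Hypothesis pi_greedy : Tpi P r pi W = Topt P r a0 W.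

Local Notation M := (Ppi P pi).
Local Notation res := (Topt P r a0 W - W - g).

Lemma Ppi_powS t : M ^+ t.+1 = M *m M ^+ t.
Proof. by rewrite exprS mulmxE. Qed.

Lemma Ppi_powSr t : M ^+ t.+1 = M ^+ t *m M.
Proof. by rewrite exprSr mulmxE. Qed.

Lemma Ppi_pow_norm t V : normInf (M ^+ t *m V) <= normInf V.
Proof.
elim: t => [|t IH]; first by rewrite expr0 mul1mx.
rewrite Ppi_powS -mulmxA; apply: normInf_le => [|s]; first exact: normInf_ge0.
exact: le_trans (Ppi_mulmx_norm P_MDP _ s pi_pol) IH.
Qed.

Lemma Ppi_pow_fix t : M ^+ t *m g = g.
Proof. by elim: t => [|t IH]; rewrite ?expr0 ?mul1mx // Ppi_powS -mulmxA IH pi_g. Qed.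

Lemma rpi_decomp : rpi r pi = res + g + W - M *m W.
Proof. by rewrite -pi_greedy /Tpi !subrK addrK. Qed.

Lemma reward_sum_entry X s T : rpi r pi = X + g + W - M *m W ->
  \sum_(t < T) (M ^+ t *m rpi r pi) s 0 =
  \sum_(t < T) (M ^+ t *m X) s 0 + T%:R * g s 0 + (W s 0 - (M ^+ T *m W) s 0).
Proof.
move=> rpiE; elim: T => [|T IH].
  by rewrite !big_ord0 mulr0n mul0r expr0 mul1mx subrr !addr0.
rewrite !big_ord_recr /= IH rpiE !mulmxDr mulmxN Ppi_pow_fix mulmxA -Ppi_powSr.
rewrite !(entryD, entryB, entryN) -natr1; ring.
Qed.

Lemma gpi_dist_le : normInf (g - gpi P r pi) <= normInf res.
Proof.
apply: normInf_le => [|s]; first exact: normInf_ge0.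
rewrite entryB mxE distrC.
apply: (@limn_inf_dist_le _ _ (fun T => W s 0 - (M ^+ T *m W) s 0) _ _ (normInf W + normInf W)).
  move=> T; apply: le_trans (ler_normB _ _) _.
  exact: lerD (le_normInf _ _) (le_trans (le_normInf _ s) (Ppi_pow_norm T W)).
move=> T T_gt0; have T_neq0 : T%:R != 0 :> R by rewrite pnatr_eq0 -lt0n.
rewrite (reward_sum_entry _ _ rpi_decomp) mulrDr mulrDr mulrA mulVf // mul1r addrAC addrK addrK.
rewrite normrM ger0_norm ?invr_ge0 ?ler0n // ler_pdivrMl ?ltr0n //.
apply: le_trans (ler_norm_sum _ _ _) _.
apply: le_trans (_ : \sum_(t < T) normInf res <= _).
  by apply: ler_sum => t _; apply: le_trans (le_normInf _ s) (Ppi_pow_norm t _).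
by rewrite sumr_const card_ord mulr_natl.
Qed.

End AverageReward.

(* [u = 6 e / eps] is the burn-in time after which greedy actions keep [g], and [m] the
   first index past it; the constants in [K] are chosen so that this holds. *)
Lemma burn_in_cost_le (R : realFieldType) (u m K j : R) :
  0 <= u -> 0 <= m <= u + 1 -> 2 * u + 3 / 2 <= K -> K < j + 1 -> 0 <= j ->
  2 / 3 * (j + 1) * ((m + 2) * (m + 3)) <= K * (j + 3) ^+ 2.
Proof.
move=> u_ge0 /andP[m_ge0 m_le] K_ge K_lt j_ge0.
have K_ge0 : 0 <= K by lra.
have m_sq : (m + 2) * (m + 3) <= (u + 3) * (u + 4) by apply: ler_pM; lra.
have u_sq : (2 * u + 3 / 2) * (2 * u + 3 / 2 + 4) <= K * (K + 4) by apply: ler_pM; lra.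
have K_sq : K * (K + 4) <= K * (j + 5) by apply: ler_wpM2l => //; lra.
have : (j + 1) * (2 / 3 * ((m + 2) * (m + 3))) <= (j + 1) * (K * (j + 5)).
  by apply: ler_wpM2l; [lra | nra].
have := mulr_ge0 K_ge0 j_ge0; rewrite expr2; nra.
Qed.

Section AnchoredValueIteration.
Variables (R : realType) (n : nat) (A : finType) (a0 : A).
Variables (P : 'I_n -> A -> 'I_n -> R) (r : 'I_n -> A -> R).
Hypothesis P_MDP : is_MDP P.
Variables (g h : 'cV[R]_n).
Hypothesis gh_bellman : modified_bellman P r a0 g h.
Variable V : nat -> 'cV[R]_n.
Hypothesis V_succ : forall k, V k.+1 = lam R k.+1 *: V 0%N
                      + (1 - lam R k.+1) *: Topt P r a0 (V k).

Local Notation T := (Topt P r a0).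
Local Notation qval := (qval P r).
Local Notation Pg := (Pg P g).
Let e := normInf (V 0%N - h).

(* [ref k] is the anchored iteration started from [h], since
   [drift k.+1 = (k + 1) (drift k + 1) / (k + 3)]. *)
Definition drift k : R := k%:R / 3.
Definition ref k := h + drift k *: g.
Definition err k := V k - ref k.
Definition Terr k s := T (V k) s 0 - T (ref k) s 0.
Definition incr k := normInf (err k.+1 - err k).
Definition residual k := T (V k) - V k - g.
Definition greedy_preserves_gain k :=
  forall s a, qval (V k) s a = T (V k) s 0 -> Pg s a = g s 0.

Lemma e_ge0 : 0 <= e. Proof. exact: normInf_ge0. Qed.

Lemma drift_ge0 k : 0 <= drift k. Proof. by rewrite divr_ge0 ?ler0n. Qed.

Lemma err0 : err 0 = V 0%N - h.
Proof. by rewrite /err /ref /drift mul0r scale0r addr0. Qed.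

Lemma err_entry k s : err k s 0 = V k s 0 - h s 0 - drift k * g s 0.
Proof. by rewrite entryB entryD entryZ opprD addrA. Qed.

Lemma Terr_entry k s : Terr k s = T (V k) s 0 - h s 0 - (drift k + 1) * g s 0.
Proof. by rewrite /Terr Topt_shift ?drift_ge0 // opprD addrA. Qed.

Lemma V_succ_entry k s :
  V k.+1 s 0 = (2 * V 0%N s 0 + (k%:R + 1) * T (V k) s 0) / (k%:R + 3).
Proof.
have k_ge0 : (0 : R) <= k%:R by rewrite ler0n.
by rewrite V_succ entryD !entryZ /lam -natr1; field; lra.
Qed.

Lemma err_succ_entry k s :
  err k.+1 s 0 = (2 * err 0 s 0 + (k%:R + 1) * Terr k s) / (k%:R + 3).
Proof.
have k_ge0 : (0 : R) <= k%:R by rewrite ler0n.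
by rewrite err0 err_entry V_succ_entry entryB Terr_entry /drift -natr1; field; lra.
Qed.

Lemma err_bound k : normInf (err k) <= e.
Proof.
elim: k => [|k IH]; first by rewrite err0.
have k_ge0 : (0 : R) <= k%:R by rewrite ler0n.
apply: normInf_le => [|s]; first exact: e_ge0.
have err0_le : `|err 0 s 0| <= e by rewrite err0; apply: le_normInf.
have Terr_le : `|Terr k s| <= e.
  exact: le_trans (Topt_nonexpansive a0 r P_MDP _ _ s) IH.
rewrite err_succ_entry normrM (ger0_norm (x := _^-1)) ?invr_ge0 ?ler_pdivrMr; try lra.
apply: le_trans (ler_normD _ _) _.
rewrite normrM (normrM (k%:R + 1)) (ger0_norm (x := 2)) // (ger0_norm (x := _ + 1)); last lra.
have : (k%:R + 1) * `|Terr k s| <= (k%:R + 1) * e by rewrite ler_wpM2l //; lra.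
lra.
Qed.

Lemma err_entry_bound k s : `|err k s 0| <= e.
Proof. exact: le_trans (le_normInf _ s) (err_bound k). Qed.

Lemma Terr_bound k s : `|Terr k s| <= e.
Proof. exact: le_trans (Topt_nonexpansive a0 r P_MDP _ _ s) (err_bound k). Qed.

Lemma qval_V_entry k s a :
  qval (V k) s a = qval h s a + drift k * Pg s a + \sum_s' P s a s' * err k s' 0.
Proof.
have := qvalB P r (V k) (ref k) s a; rewrite -/(err k) /ref qval_shift => <-.
by rewrite addrC subrK.
Qed.

(* A greedy action at [V k] is within [2 e] of optimal for [h], while a gain-losing
   action pays [drift k] times its deficit. *)
Lemma greedy_preserves_gain_of_drift k :
  (forall s a, Pg s a != g s 0 -> 2 * e < drift k * (g s 0 - Pg s a)) ->
  greedy_preserves_gain k.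
Proof.
move=> drift_dominates s a a_greedy; apply/eqP; apply: contraT => a_deficit.
have := drift_dominates s a a_deficit; rewrite mulrBr.
have [b [Pgb qhb]] := optimal_action gh_bellman s.
have := qval_le_Topt a0 P r (V k) s b; rewrite -a_greedy !qval_V_entry Pgb qhb.
have := qval_h_le gh_bellman s a.
have := le_trans (prob_vec_avg_le (err k) (kernel_prob_vec P_MDP s a)) (err_bound k).
have := le_trans (prob_vec_avg_norm (err k) (kernel_prob_vec P_MDP s b)) (err_bound k).
rewrite ler_norml => /andP[+ _]; lra.
Qed.

Lemma qval_V_succ_sub k s a : qval (V k.+1) s a - qval (V k) s a =
  \sum_s' P s a s' * (err k.+1 - err k) s' 0 + Pg s a / 3.
Proof.
rewrite qvalB /Pg mulr_suml -big_split /=; apply: eq_bigr => s' _.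
by rewrite !(entryB, entryD, entryZ) /drift -natr1; ring.
Qed.

Lemma Terr_succ_sub k s :
  Terr k.+1 s - Terr k s = T (V k.+1) s 0 - T (V k) s 0 - g s 0 / 3.
Proof. by rewrite !Terr_entry /drift -natr1; ring. Qed.

Lemma Terr_incr_le k s : Terr k.+1 s - Terr k s <= incr k.
Proof.
have [a [_ T_le]] := Topt_sub_le_greedy a0 P r (V k.+1) (V k) s.
rewrite -(qvalB P r) qval_V_succ_sub in T_le.
have := prob_vec_avg_le (err k.+1 - err k) (kernel_prob_vec P_MDP s a).
have := Pg_le gh_bellman s a.
by rewrite Terr_succ_sub /incr; lra.
Qed.

(* A greedy action [a] at [V k] has [Pg s a = g s], so along it [T] grows by exactly the
   drift [g / 3]; without this only the upper bound above holds. *)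
Lemma Terr_incr_ge k s : greedy_preserves_gain k -> - incr k <= Terr k.+1 s - Terr k s.
Proof.
move=> k_good.
have [a [a_greedy T_le]] := Topt_sub_le_greedy a0 P r (V k) (V k.+1) s.
rewrite -(qvalB P r) -[in X in _ <= X]opprB qval_V_succ_sub (k_good s a (esym a_greedy)) in T_le.
have := prob_vec_avg_norm (err k.+1 - err k) (kernel_prob_vec P_MDP s a).
by rewrite Terr_succ_sub /incr ler_norml => /andP[+ _]; lra.
Qed.

Lemma Terr_incr_norm k s : greedy_preserves_gain k ->
  `|Terr k.+1 s - Terr k s| <= incr k.
Proof. by move=> k_good; rewrite ler_norml Terr_incr_ge ?Terr_incr_le. Qed.

Lemma V_succ2_entry j s : (j%:R + 3) * (j%:R + 4) * (V j.+2 - V j.+1) s 0 =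
  2 * (T (V j) s 0 - V 0%N s 0) + (j%:R + 2) * (j%:R + 3) * (T (V j.+1) s 0 - T (V j) s 0).
Proof.
have j_ge0 : (0 : R) <= j%:R by rewrite ler0n.
by rewrite entryB !V_succ_entry -!natr1; field; lra.
Qed.

Lemma anchor_gap_bound j s :
  `|T (V j) s 0 - V 0%N s 0| <= 2 * e + (j%:R + 3) / 3 * normInf g.
Proof.
have -> : T (V j) s 0 - V 0%N s 0 = Terr j s - err 0 s 0 + (j%:R + 3) / 3 * g s 0.
  by rewrite Terr_entry err0 entryB /drift; lra.
have j3_gt0 : 0 < (j%:R + 3) / 3 :> R by rewrite divr_gt0 // ltr_wpDl ?ler0n.
apply: le_trans (ler_normD _ _) _; rewrite normrM (gtr0_norm j3_gt0).
apply: lerD; last by rewrite ler_pM2l // le_normInf.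
by apply: le_trans (ler_normB _ _) _; have := Terr_bound j s; have := err_entry_bound 0 s; lra.
Qed.

Lemma V_incr_step j : (j%:R + 3) * (j%:R + 4) * normInf (V j.+2 - V j.+1) <=
  4 * e + 2 * (j%:R + 3) / 3 * normInf g + (j%:R + 2) * (j%:R + 3) * normInf (V j.+1 - V j).
Proof.
have j_ge0 : (0 : R) <= j%:R by rewrite ler0n.
have c_ge0 : 0 <= (j%:R + 2) * (j%:R + 3) :> R by rewrite mulr_ge0 // addr_ge0 ?ler0n.
apply: normInf_le_scaled => [||s]; first by rewrite mulr_gt0 //; lra.
  rewrite !addr_ge0 ?mulr_ge0 ?divr_ge0 ?e_ge0 ?normInf_ge0 //; lra.
rewrite -[X in X * _]ger0_norm; last by rewrite mulr_ge0 //; lra.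
rewrite -normrM V_succ2_entry; apply: le_trans (ler_normD _ _) _.
rewrite normrM (normrM ((j%:R + 2) * _)) (ger0_norm (x := 2)) // (ger0_norm c_ge0).
have := anchor_gap_bound j s.
have := ler_wpM2l c_ge0 (Topt_nonexpansive a0 r P_MDP (V j.+1) (V j) s).
lra.
Qed.

Lemma V_incr_bound j : (j%:R + 2) * (j%:R + 3) * normInf (V j.+1 - V j) <=
  4 * (j%:R + 1) * e + (j%:R + 2) * (j%:R + 3) / 3 * normInf g.
Proof.
have e_g_ge0 := addr_ge0 (addr_ge0 e_ge0 e_ge0) (normInf_ge0 g).
elim: j => [|j IH]; last by have := V_incr_step j; rewrite -(@natr1 R j); lra.
suff : 3 * normInf (V 1 - V 0%N) <= 2 * e + normInf g by rewrite mulr0n; lra.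
apply: normInf_le_scaled => [||s]; rewrite ?ltr0n //; first lra.
have -> : 3 * `|(V 1 - V 0%N) s 0| = `|T (V 0%N) s 0 - V 0%N s 0|.
  by rewrite -(@ger0_norm _ 3) // -normrM entryB V_succ_entry; congr `|_|; field.
by have := anchor_gap_bound 0 s; rewrite mulr0n; lra.
Qed.

Lemma incr_crude j : (j%:R + 2) * (j%:R + 3) * incr j <=
  4 * (j%:R + 1) * e + 2 * ((j%:R + 2) * (j%:R + 3) / 3) * normInf g.
Proof.
have j_ge0 : (0 : R) <= j%:R by rewrite ler0n.
have c_ge0 : 0 <= (j%:R + 2) * (j%:R + 3) :> R by rewrite mulr_ge0 // addr_ge0 ?ler0n.
have incr_le : incr j <= normInf (V j.+1 - V j) + normInf g / 3.
  apply: normInf_le => [|s].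
    by rewrite addr_ge0 ?divr_ge0 ?normInf_ge0.
  have -> : (err j.+1 - err j) s 0 = (V j.+1 - V j) s 0 - g s 0 / 3.
    by rewrite !(entryB, entryD, entryZ) /drift -natr1; field.
  have := le_normInf (V j.+1 - V j) s; have := le_normInf g s.
  have := ler_normB ((V j.+1 - V j) s 0) (g s 0 / 3).
  by rewrite normrM (ger0_norm (x := 3^-1)) //; lra.
by have := ler_wpM2l c_ge0 incr_le; have := V_incr_bound j; lra.
Qed.

Lemma err_succ2_entry j s : (j%:R + 3) * (j%:R + 4) * (err j.+2 - err j.+1) s 0 =
  - 2 * err 0 s 0 + (j%:R + 2) * (j%:R + 3) * (Terr j.+1 s - Terr j s) + 2 * Terr j s.
Proof.
have j_ge0 : (0 : R) <= j%:R by rewrite ler0n.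
by rewrite entryB !err_succ_entry -!natr1; field; lra.
Qed.

Lemma incr_step j : greedy_preserves_gain j ->
  (j%:R + 3) * (j%:R + 4) * incr j.+1 <= 4 * e + (j%:R + 2) * (j%:R + 3) * incr j.
Proof.
move=> j_good.
have j_ge0 : (0 : R) <= j%:R by rewrite ler0n.
have c_ge0 : 0 <= (j%:R + 2) * (j%:R + 3) :> R by rewrite mulr_ge0 // addr_ge0 ?ler0n.
apply: normInf_le_scaled => [||s]; first by rewrite mulr_gt0 //; lra.
  by rewrite addr_ge0 ?mulr_ge0 ?e_ge0 ?normInf_ge0.
rewrite -[X in X * _]ger0_norm; last by rewrite mulr_ge0 //; lra.
rewrite -normrM err_succ2_entry.
have := ler_wpM2l c_ge0 (Terr_incr_norm s j_good); rewrite -(ger0_norm c_ge0) -normrM.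
have := err_entry_bound 0 s; have := Terr_bound j s.
by rewrite !ler_norml (ger0_norm c_ge0); lra.
Qed.

Lemma incr0_le : 6 * incr 0 <= 4 * e.
Proof.
apply: normInf_le_scaled => [||s]; rewrite ?ltr0n ?mulr_ge0 ?e_ge0 //.
have -> : (err 1 - err 0) s 0 = (Terr 0 s - err 0 s 0) / 3.
  by rewrite entryB err_succ_entry mulr0n; field.
have := ler_normB (Terr 0 s) (err 0 s 0); have := Terr_bound 0 s; have := err_entry_bound 0 s.
by rewrite normrM (ger0_norm (x := 3^-1)) //; lra.
Qed.

Lemma incr_propagate m j B : (m <= j)%N ->
  (forall i, (m <= i < j)%N -> greedy_preserves_gain i) ->
  (m%:R + 2) * (m%:R + 3) * incr m <= 4 * (m%:R + 1) * e + B ->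
  (j%:R + 2) * (j%:R + 3) * incr j <= 4 * (j%:R + 1) * e + B.
Proof.
move=> + + incr_m; elim: j => [|j IH].
  by rewrite leqn0 => /eqP m0 _; move: incr_m; rewrite m0.
rewrite leq_eqVlt => /orP[/eqP m_j _ | m_lt good_mj]; first by move: incr_m; rewrite m_j.
have j_good : greedy_preserves_gain j by apply: good_mj; rewrite -ltnS m_lt ltnSn.
have IHj : (j%:R + 2) * (j%:R + 3) * incr j <= 4 * (j%:R + 1) * e + B.
  by apply: IH => // i /andP[m_i i_j]; apply: good_mj; rewrite m_i ltnW.
by have := incr_step j_good; rewrite -(@natr1 R j); lra.
Qed.

Lemma residual_succ_entry j s : (j%:R + 3) * residual j.+1 s 0 =
  2 * (Terr j.+1 s - err 0 s 0) + (j%:R + 1) * (Terr j.+1 s - Terr j s).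
Proof.
have j_ge0 : (0 : R) <= j%:R by rewrite ler0n.
have -> : residual j.+1 s 0 = T (V j.+1) s 0 - V j.+1 s 0 - g s 0 by rewrite !entryB.
have -> : V j.+1 s 0 = err j.+1 s 0 + h s 0 + drift j.+1 * g s 0 by rewrite err_entry; lra.
by rewrite err_succ_entry !Terr_entry /drift -!natr1; field; lra.
Qed.

Lemma residual_succ_le j : greedy_preserves_gain j ->
  (j%:R + 3) * normInf (residual j.+1) <= 4 * e + (j%:R + 1) * incr j.
Proof.
move=> j_good.
have j1_ge0 : (0 : R) <= j%:R + 1 by rewrite addr_ge0 ?ler0n.
apply: normInf_le_scaled => [||s]; first by rewrite ltr_wpDl ?ler0n.
  by rewrite addr_ge0 ?mulr_ge0 ?e_ge0 ?normInf_ge0.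
rewrite -[X in X * _]ger0_norm ?addr_ge0 ?ler0n // -normrM residual_succ_entry.
have := ler_wpM2l j1_ge0 (Terr_incr_norm s j_good); rewrite -(ger0_norm j1_ge0) -normrM.
have := err_entry_bound 0 s; have := Terr_bound j.+1 s.
by rewrite !ler_norml (ger0_norm j1_ge0); lra.
Qed.

Lemma residual_le j B K : greedy_preserves_gain j ->
  (j%:R + 2) * (j%:R + 3) * incr j <= 4 * (j%:R + 1) * e + B ->
  (j%:R + 1) * B <= K * (j%:R + 3) ^+ 2 * normInf g ->
  normInf (residual j.+1) <= 8 / (j%:R + 2) * e + K / (j%:R + 2) * normInf g.
Proof.
move=> j_good incr_j B_le.
have j_ge0 : (0 : R) <= j%:R by rewrite ler0n.
have ej_ge0 : 0 <= e * j%:R by rewrite mulr_ge0 ?e_ge0.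
have e0 := e_ge0.
have c_ge0 : 0 <= (j%:R + 2) * (j%:R + 3) :> R by rewrite mulr_ge0 // addr_ge0 ?ler0n.
have j3_gt0 : 0 < (j%:R + 3) ^+ 2 :> R by rewrite exprn_gt0 // ltr_wpDl ?ler0n.
have x_le : (j%:R + 2) * normInf (residual j.+1) <= 8 * e + K * normInf g.
  rewrite -(ler_pM2l j3_gt0).
  have := ler_wpM2l c_ge0 (residual_succ_le j_good).
  have := ler_wpM2l (addr_ge0 j_ge0 ler01) incr_j.
  by move: B_le; rewrite !expr2; lra.
have -> : 8 / (j%:R + 2) * e + K / (j%:R + 2) * normInf g = (8 * e + K * normInf g) / (j%:R + 2).
  by field; lra.
by rewrite ler_pdivlMr 1?mulrC //; lra.
Qed.

Lemma greedy_preserves_gain_late eps i : eps_gap P g = eps%:E ->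
  6 * e / eps < i%:R -> greedy_preserves_gain i.
Proof.
move=> eps_eq i_late; have eps_gt0 := eps_gap_gt0 gh_bellman eps_eq.
apply: greedy_preserves_gain_of_drift => s a a_deficit.
have := eps_gap_le_deficit gh_bellman a_deficit; rewrite eps_eq lee_fin => eps_le.
have := ler_wpM2l (drift_ge0 i) eps_le; rewrite ltr_pdivrMr // in i_late.
by rewrite /drift; lra.
Qed.

Lemma residual_bound_finite_gap eps k : eps_gap P g = eps%:E ->
  Kconst P r g h (V 0%N) < k%:R ->
  greedy_preserves_gain k /\ normInf (residual k) <=
    8 / (k%:R + 1) * e + Kconst P r g h (V 0%N) / (k%:R + 1) * normInf g.
Proof.
move=> eps_eq; set K := Kconst _ _ _ _ _ => K_lt_k.
have eps_gt0 := eps_gap_gt0 gh_bellman eps_eq.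
have eps_le := eps_gap_le P_MDP eps_eq.
pose u := 6 * e / eps.
have u_ge0 : 0 <= u by rewrite divr_ge0 ?mulr_ge0 ?e_ge0 // ltW.
have late i : u < i%:R -> greedy_preserves_gain i by apply: greedy_preserves_gain_late eps_eq.
have K_ge : 2 * u + 3 / 2 <= K.
  have -> : K = 3 * rnorm r / eps + 2 * u + 3 * normInf g / eps.
    by rewrite /K /Kconst eps_eq /= -/e /u; field; rewrite gt_eqF.
  have : 3 / 2 <= 3 * normInf g / eps by rewrite ler_pdivlMr //; lra.
  have : 0 <= 3 * rnorm r / eps by rewrite divr_ge0 ?mulr_ge0 ?rnorm_ge0 // ltW.
  lra.
case: k K_lt_k => [|j]; first by rewrite mulr0n; lra.
have -> : j.+1%:R + 1 = j%:R + 2 :> R by rewrite -natr1 -addrA.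
rewrite -natr1 => K_lt.
have j_ge0 : (0 : R) <= j%:R by rewrite ler0n.
split; first by apply: late; rewrite -natr1; lra.
pose m := (Num.Def.trunc u).+1.
have /andP[m_le_u u_lt_m] := truncn_itv u_ge0; rewrite -/m in u_lt_m.
have m_le_j : (m <= j)%N by rewrite -ltnS -(ltr_nat R) -natr1 /m -natr1; lra.
have mj_good i : (m <= i < j)%N -> greedy_preserves_gain i.
  move=> /andP[m_i _]; apply: late; apply: lt_le_trans u_lt_m _; by rewrite ler_nat.
have j_good : greedy_preserves_gain j.
  by apply: late; apply: lt_le_trans u_lt_m _; rewrite ler_nat.
apply: residual_le j_good (incr_propagate m_le_j mj_good (incr_crude m)) _.
have := @burn_in_cost_le _ u m%:R K j%:R u_ge0.
rewrite ler0n /m -natr1 /= => /(_ _ K_ge K_lt j_ge0) cost_le.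
have := ler_wpM2r (normInf_ge0 g) (cost_le _); lra.
Qed.

Lemma residual_bound_no_gap k : eps_gap P g = +oo%E ->
  Kconst P r g h (V 0%N) < k%:R ->
  greedy_preserves_gain k /\ normInf (residual k) <=
    8 / (k%:R + 1) * e + Kconst P r g h (V 0%N) / (k%:R + 1) * normInf g.
Proof.
move=> eps_eq; rewrite /Kconst eps_eq mul0r mul0r addr0 => k_gt0.
have all_good i : greedy_preserves_gain i.
  move=> s a _; apply/eqP; apply: contraT => /(eps_gap_le_deficit gh_bellman).
  by rewrite eps_eq.
split=> //; case: k k_gt0 => [|j _]; first by rewrite ltxx.
have incr0 : (0%:R + 2) * (0%:R + 3) * incr 0 <= 4 * (0%:R + 1) * e + 0.
  by have := incr0_le; rewrite mulr0n; lra.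
have := @residual_le j 0 0 (all_good j) (incr_propagate (leq0n j) (fun i _ => all_good i) incr0).
by rewrite mulr0 !mul0r addr0 -(@natr1 R j) -addrA; apply.
Qed.

Lemma residual_bound k : Kconst P r g h (V 0%N) < k%:R ->
  greedy_preserves_gain k /\ normInf (residual k) <=
    8 / (k%:R + 1) * e + Kconst P r g h (V 0%N) / (k%:R + 1) * normInf g.
Proof.
case eps_eq: (eps_gap P g) => [eps||].
- exact: residual_bound_finite_gap eps_eq.
- exact: residual_bound_no_gap.
- by have := eps_gap_ge0 P g; rewrite eps_eq.
Qed.

Lemma greedy_policy_fixes_gain k pi : is_policy pi -> Tpi P r pi (V k) = T (V k) ->
  greedy_preserves_gain k -> Ppi P pi *m g = g.
Proof.
move=> pi_pol pi_greedy k_good; apply/matrixP => s j; rewrite (ord1 j) Ppi_mulmx_entry.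
case: (pi_pol) => _ pi_sum1; rewrite -[RHS]mul1r -(pi_sum1 s) mulr_suml.
apply: eq_bigr => a _; have [->|pa] := eqVneq (pi s a) 0; first by rewrite !mul0r.
by congr (_ * _); apply: k_good; apply: greedy_support pi_pol pi_greedy pa.
Qed.

End AnchoredValueIteration.

Theorem theorem2 (R : realType) (n : nat) (A : finType) (a0 : A)
  (P : 'I_n -> A -> 'I_n -> R) (r : 'I_n -> A -> R)
  (g h : 'cV[R]_n) (V : nat -> 'cV[R]_n) (pik : nat -> 'I_n -> A -> R) :
  is_MDP P ->
  modified_bellman P r a0 g h ->
  (forall k, V k.+1 = lam R k.+1 *: V 0%N
                      + (1 - lam R k.+1) *: Topt P r a0 (V k)) ->
  (forall k, is_policy (pik k) /\ Tpi P r (pik k) (V k) = Topt P r a0 (V k)) ->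
  forall k : nat, Kconst P r g h (V 0%N) < k%:R ->
    normInf (g - gpi P r (pik k)) <= normInf (Topt P r a0 (V k) - V k - g) /\
    normInf (Topt P r a0 (V k) - V k - g)
      <= 8 / (k%:R + 1) * normInf (V 0%N - h)
         + Kconst P r g h (V 0%N) / (k%:R + 1) * normInf g.
Proof.
move=> P_MDP gh_bellman V_succ greedy k K_lt_k.
have [k_good res_le] := residual_bound P_MDP gh_bellman V_succ K_lt_k.
have [pi_pol pi_greedy] := greedy k.
have pi_g := greedy_policy_fixes_gain pi_pol pi_greedy k_good.
by split=> //; exact: (gpi_dist_le P_MDP pi_pol pi_g pi_greedy).
Qed.
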